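(* Let $\mathbf{A}\in\mathbb{C}^{M\times N_a}$ and $\mathbf{B}\in\mathbb{C}^{M\times N_b}$ have unit-$\ell_2$-norm columns, with coherence parameters $\mu_a,\mu_b,\mu_m$. Let $\mathcal{E}\subseteq\{1,\dots,N_b\}$ with $|\mathcal{E}|=n_e$ and $1-\mu_b(n_e-1)>0$, let $\mathbf{R}_{\mathcal{E}}=\mathbf{I}_M-\mathbf{B}_{\mathcal{E}}\mathbf{B}_{\mathcal{E}}^\dagger$ and $\widetilde{\mathbf{A}}=\mathbf{R}_{\mathcal{E}}\mathbf{A}$. For each integer $n_x\ge1$, let $\delta_{n_x}$ be the smallest number such that $(1-\delta_{n_x})\|\mathbf{x}\|_2^2\le\|\widetilde{\mathbf{A}}\mathbf{x}\|_2^2\le(1+\delta_{n_x})\|\mathbf{x}\|_2^2$ for all $\mathbf{x}\in\mathbb{C}^{N_a}$ with at most $n_x$ nonzero entries. Then $$\delta_{n_x}\le\mu_a(n_x-1)+\frac{n_xn_e\mu_m^2}{[1-\mu_b(n_e-1)]^+}.$$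
   Context: Coherence parameters: $\mu_a=\max_{k\ne\ell}|\mathbf{a}_k^H\mathbf{a}_\ell|$, $\mu_b=\max_{k\ne\ell}|\mathbf{b}_k^H\mathbf{b}_\ell|$, $\mu_m=\max_{k,\ell}|\mathbf{a}_k^H\mathbf{b}_\ell|$. $[x]^+=\max\{x,0\}$. $\mathbf{B}_{\mathcal{E}}$ is the submatrix of columns of $\mathbf{B}$ indexed by $\mathcal{E}$ and $\mathbf{M}^\dagger=(\mathbf{M}^H\mathbf{M})^{-1}\mathbf{M}^H$. *)

(* The complex field is modelled by an arbitrary
   numClosedFieldType C (e.g. algC); conjugation is Num.conj. *)
From HB Require Import structures.
From mathcomp Require Import all_boot all_order all_algebra.
Set Implicit Arguments. Unset Strict Implicit. Unset Printing Implicit Defensive.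
Import Order.TTheory GRing.Theory Num.Theory.
Local Open Scope ring_scope.

Section Defs.
Variable C : numClosedFieldType.

Definition adjmx m n (X : 'M[C]_(m, n)) : 'M[C]_(n, m) := (map_mx Num.conj X)^T.

Definition colip M na nb (A : 'M[C]_(M, na)) (B : 'M[C]_(M, nb))
  (k : 'I_na) (l : 'I_nb) : C :=
  \sum_(i < M) Num.conj (A i k) * B i l.

Definition sqnorm n (x : 'cV[C]_n) : C := \sum_(i < n) `|x i 0| ^+ 2.

Definition unit_cols M n (A : 'M[C]_(M, n)) : Prop :=
  forall k : 'I_n, sqnorm (col k A) = 1.

(* mu_a = max_{k <> l} |a_k^H a_l|  (max over empty set = 0) *)
Definition coh M n (A : 'M[C]_(M, n)) : C :=
  \big[Num.max/0]_(k < n) \big[Num.max/0]_(l < n | k != l) `|colip A A k l|.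

Definition mcoh M na nb (A : 'M[C]_(M, na)) (B : 'M[C]_(M, nb)) : C :=
  \big[Num.max/0]_(k < na) \big[Num.max/0]_(l < nb) `|colip A B k l|.

(* B_E : columns of B indexed by E (in increasing index order) *)
Definition subcols M nb (B : 'M[C]_(M, nb)) (E : {set 'I_nb}) : 'M[C]_(M, #|E|) :=
  colsub (fun j : 'I_#|E| => enum_val j) B.

(* Moore-Penrose pseudo-inverse for full column rank: (X^H X)^{-1} X^H *)
Definition pinv m n (X : 'M[C]_(m, n)) : 'M[C]_(n, m) :=
  invmx (adjmx X *m X) *m adjmx X.

Definition projE M nb (B : 'M[C]_(M, nb)) (E : {set 'I_nb}) : 'M[C]_M :=
  1%:M - subcols B E *m pinv (subcols B E).

Definition nnz n (x : 'cV[C]_n) : nat := #|[set i | x i 0 != 0]|.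

Definition rip M n (X : 'M[C]_(M, n)) (s : nat) (d : C) : Prop :=
  forall x : 'cV[C]_n, (nnz x <= s)%N ->
    (1 - d) * sqnorm x <= sqnorm (X *m x) <= (1 + d) * sqnorm x.

Definition is_ric M n (X : 'M[C]_(M, n)) (s : nat) (d : C) : Prop :=
  d \is Num.real /\ rip X s d /\
  forall d', d' \is Num.real -> rip X s d' -> d <= d'.

Definition pospart (x : C) : C := Num.max x 0.
End Defs.

From HB Require Import structures.
From mathcomp Require Import all_boot all_order all_algebra.
From mathcomp Require Import ring.
Import Order.TTheory GRing.Theory Num.Theory.
Set Implicit Arguments. Unset Strict Implicit. Unset Printing Implicit Defensive.
Local Open Scope ring_scope.

(* Write c = 1 - mu_b (n_e - 1) > 0, y = A x for an n_x-sparse x, and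
   P = B_E B_E^dagger, so that R_E A x = (I - P) y.  The proof combines:
   - a Gershgorin-type bound: if X has unit columns with pairwise inner
     products bounded by mu, then | ||X w||^2 - ||w||^2 | <= mu (s-1) ||w||^2
     for s-sparse w (via Cauchy-Schwarz, ||w||_1^2 <= s ||w||_2^2); applied
     to A it controls ||y||^2, applied to B_E it gives the lower frame bound
     c ||w||^2 <= ||B_E w||^2, hence invertibility of the Gram matrix;
   - a projection estimate: if c ||w||^2 <= ||X w||^2 for all w, then
     P = X X^dagger is an orthogonal projector and
     ||y||^2 - ||X^H y||^2 / c <= ||(I - P) y||^2 <= ||y||^2;
   - a cross-coherence estimate: ||B_E^H A x||^2 <= n_e mu_m^2 n_x ||x||^2.
   Adding these bounds yields the RIP with the constant of the theorem; since
   that constant is real and the RIC is the least admissible constant, the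
   RIC is bounded by it. *)

Section Hermitian.
Variable C : numClosedFieldType.

Lemma adjmxM m n p (X : 'M[C]_(m, n)) (Y : 'M[C]_(n, p)) :
  adjmx (X *m Y) = adjmx Y *m adjmx X.
Proof. by rewrite /adjmx map_mxM trmx_mul. Qed.

Lemma adjmxK m n (X : 'M[C]_(m, n)) : adjmx (adjmx X) = X.
Proof. by apply/matrixP => i j; rewrite /adjmx !mxE conjCK. Qed.

Lemma adjmxB m n (X Y : 'M[C]_(m, n)) : adjmx (X - Y) = adjmx X - adjmx Y.
Proof. by apply/matrixP => i j; rewrite /adjmx !mxE rmorphB. Qed.

Lemma adjmx0 m n : adjmx (0 : 'M[C]_(m, n)) = 0.
Proof. by apply/matrixP => i j; rewrite /adjmx !mxE rmorph0. Qed.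

Lemma adjmx1 n : adjmx (1%:M : 'M[C]_n) = 1%:M.
Proof. by apply/matrixP => i j; rewrite /adjmx !mxE rmorph_nat eq_sym. Qed.

Lemma adjmxV n (X : 'M[C]_n) : adjmx (invmx X) = invmx (adjmx X).
Proof. by rewrite /adjmx map_invmx trmx_inv. Qed.

Lemma adjmx_mulE M n p (X : 'M[C]_(M, n)) (Y : 'M[C]_(M, p)) k l :
  (adjmx X *m Y) k l = colip X Y k l.
Proof. by rewrite mxE; apply: eq_bigr => i _; rewrite !mxE. Qed.

Lemma colipC M n p (X : 'M[C]_(M, n)) (Y : 'M[C]_(M, p)) k l :
  colip X Y k l = (colip Y X l k)^*.
Proof.
rewrite /colip rmorph_sum; apply: eq_bigr => i _.
by rewrite rmorphM /= conjCK mulrC.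
Qed.

Lemma colip_subcolsr M n p (X : 'M[C]_(M, n)) (B : 'M[C]_(M, p))
    (E : {set 'I_p}) k l :
  colip X (subcols B E) k l = colip X B k (enum_val l).
Proof. by apply: eq_bigr => i _; rewrite !mxE. Qed.

Lemma colip_subcols M p (B : 'M[C]_(M, p)) (E : {set 'I_p}) k l :
  colip (subcols B E) (subcols B E) k l = colip B B (enum_val k) (enum_val l).
Proof. by apply: eq_bigr => i _; rewrite !mxE. Qed.

Lemma sqnormE n (v : 'cV[C]_n) : sqnorm v = \sum_i (v i 0)^* * v i 0.
Proof. by apply: eq_bigr => i _; rewrite normCKC. Qed.

Lemma sqnorm_adj n (v : 'cV[C]_n) : sqnorm v = (adjmx v *m v) 0 0.
Proof. by rewrite sqnormE mxE; apply: eq_bigr => i _; rewrite !mxE. Qed.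

Lemma sqnorm_ge0 n (v : 'cV[C]_n) : 0 <= sqnorm v.
Proof. by apply: sumr_ge0 => i _; rewrite exprn_ge0. Qed.

Lemma sqnorm_real n (v : 'cV[C]_n) : sqnorm v \is Num.real.
Proof. exact: ger0_real (sqnorm_ge0 v). Qed.

Lemma sqnorm_eq0 n (v : 'cV[C]_n) : sqnorm v = 0 -> v = 0.
Proof.
move=> v0; apply/matrixP => i j; rewrite (ord1 j) mxE.
have vi0 : `|v i 0| ^+ 2 = 0.
  exact: (psumr_eq0P (fun k _ => exprn_ge0 2 (normr_ge0 (v k 0))) v0).
by move/eqP: vi0; rewrite expf_eq0 /= normr_eq0 => /eqP.
Qed.

Lemma colip_diag M n (X : 'M[C]_(M, n)) k : colip X X k k = sqnorm (col k X).
Proof. by rewrite sqnormE; apply: eq_bigr => i _; rewrite !mxE. Qed.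

Lemma sqnorm_gram M n (X : 'M[C]_(M, n)) (w : 'cV[C]_n) :
  sqnorm (X *m w) = \sum_k \sum_l (w k 0)^* * colip X X k l * w l 0.
Proof.
rewrite sqnorm_adj adjmxM mulmxA -(mulmxA (adjmx w)) mxE exchange_big /=.
apply: eq_bigr => l _; rewrite mxE big_distrl /=; apply: eq_bigr => k _.
by rewrite adjmx_mulE !mxE.
Qed.

End Hermitian.

(* The coherences are maxima of nonnegative numbers; in the partially ordered
   field C the maximum is only well behaved on reals, hence these lemmas. *)
Section Coherence.
Variable C : numClosedFieldType.

Lemma max_ge0 (x y : C) : 0 <= x -> 0 <= y -> 0 <= Num.max x y.
Proof. by move=> x0 y0; rewrite comparable_le_max ?real_comparable ?ger0_real ?x0. Qed.

Lemma bigmax_ge0 (I : Type) (r : seq I) (P : pred I) (F : I -> C) :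
  (forall i, P i -> 0 <= F i) -> 0 <= \big[Num.max/0]_(i <- r | P i) F i.
Proof. by move=> F0; elim/big_ind: _ => //; exact: max_ge0. Qed.

Lemma le_bigmax (I : eqType) (r : seq I) (P : pred I) (F : I -> C) i :
  (forall j, P j -> 0 <= F j) -> i \in r -> P i ->
  F i <= \big[Num.max/0]_(j <- r | P j) F j.
Proof.
move=> F0 + Pi; elim: r => // a r IH; rewrite inE big_cons.
have r0 := @bigmax_ge0 _ r _ _ F0; case: ifP => Pa.
  rewrite comparable_le_max ?real_comparable ?ger0_real ?F0 //.
  by case/orP=> [/eqP-> | /IH->]; rewrite ?lexx ?orbT.
by case/orP=> [/eqP ia | /IH//]; rewrite ia Pa in Pi.
Qed.

Lemma coh_ge0 M n (X : 'M[C]_(M, n)) : 0 <= coh X.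
Proof. by apply: bigmax_ge0 => k _; apply: bigmax_ge0. Qed.

Lemma coh_le M n (X : 'M[C]_(M, n)) k l : k != l -> `|colip X X k l| <= coh X.
Proof.
move=> kl.
have row_ge0 j : true -> 0 <= \big[Num.max/0]_(l < n | j != l) `|colip X X j l|.
  by move=> _; apply: bigmax_ge0.
apply: le_trans (le_bigmax row_ge0 (mem_index_enum k) isT).
exact: (le_bigmax (fun l _ => normr_ge0 (colip X X k l)) (mem_index_enum l) kl).
Qed.

Lemma mcoh_ge0 M n p (X : 'M[C]_(M, n)) (Y : 'M[C]_(M, p)) : 0 <= mcoh X Y.
Proof. by apply: bigmax_ge0 => k _; apply: bigmax_ge0. Qed.

Lemma mcoh_le M n p (X : 'M[C]_(M, n)) (Y : 'M[C]_(M, p)) k l :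
  `|colip X Y k l| <= mcoh X Y.
Proof.
have row_ge0 j : true -> 0 <= \big[Num.max/0]_(l < p) `|colip X Y j l|.
  by move=> _; apply: bigmax_ge0.
apply: le_trans (le_bigmax row_ge0 (mem_index_enum k) isT).
exact: (le_bigmax (fun l _ => normr_ge0 (colip X Y k l)) (mem_index_enum l) isT).
Qed.

End Coherence.

Lemma sum_offdiag (R : comPzRingType) (I : finType) (b : I -> R) :
  \sum_k \sum_(l | l != k) b k * b l = (\sum_k b k) ^+ 2 - \sum_k b k ^+ 2.
Proof.
rewrite expr2 mulr_suml -sumrB; apply: eq_bigr => k _.
by rewrite mulr_sumr [in RHS](bigD1 k) //= expr2 addrAC subrr add0r.
Qed.

Section Sparse.
Variable C : numClosedFieldType.

(* Cauchy-Schwarz for a real family against the constant family 1: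
   (sum_T a)^2 <= |T| sum_T a^2, via  sum_{k,l in T} (a_k - a_l)^2 >= 0. *)
Lemma sqr_sum_le (I : finType) (T : {pred I}) (a : I -> C) :
  (forall k, a k \is Num.real) ->
  (\sum_(k in T) a k) ^+ 2 <= #|T|%:R * \sum_(k in T) a k ^+ 2.
Proof.
move=> a_real; set S := \sum_(k in T) a k; set Q := \sum_(k in T) a k ^+ 2.
have row_sum k : \sum_(l in T) (a k - a l) ^+ 2
    = #|T|%:R * a k ^+ 2 + Q - 2 * a k * S.
  have -> : \sum_(l in T) (a k - a l) ^+ 2
      = \sum_(l in T) (a k ^+ 2 + a l ^+ 2 - 2 * a k * a l).
    by apply: eq_bigr => l _; ring.
  by rewrite sumrB big_split /= sumr_const -/Q /S mulr_sumr !mulr_natl.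
have dev : \sum_(k in T) \sum_(l in T) (a k - a l) ^+ 2
    = 2 * (#|T|%:R * Q - S ^+ 2).
  rewrite (eq_bigr _ (fun k _ => row_sum k)) sumrB big_split /= sumr_const.
  by rewrite -mulr_sumr -!mulr_suml -/S -/Q -mulr_natr -mulr_sumr -/S; ring.
have : 0 <= \sum_(k in T) \sum_(l in T) (a k - a l) ^+ 2.
  by do 2!apply: sumr_ge0 => ? _; rewrite -realEsqr rpredB.
by rewrite dev pmulr_rge0 // subr_ge0.
Qed.

Lemma sparse_l1_sq n (x : 'cV[C]_n) s : (nnz x <= s)%N ->
  (\sum_k `|x k 0|) ^+ 2 <= s%:R * sqnorm x.
Proof.
move=> xs; set T := [set i | x i 0 != 0].
have off_supp (F : C -> C) :
    F 0 = 0 -> \sum_k F `|x k 0| = \sum_(k in T) F `|x k 0|.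
  move=> F0; rewrite (bigID (mem T)) /= [X in _ + X]big1 ?addr0 // => k.
  by rewrite inE negbK => /eqP->; rewrite normr0.
rewrite (off_supp id) // /sqnorm (off_supp (fun t => t ^+ 2)) ?expr0n //.
apply: le_trans (sqr_sum_le _ (fun k => normr_real _)) _.
by rewrite ler_wpM2r ?sumr_ge0 // => [k _|]; rewrite ?exprn_ge0 ?ler_nat.
Qed.

Lemma gram_deviation M n (X : 'M[C]_(M, n)) (mu : C) (w : 'cV[C]_n) s :
  0 <= mu -> (forall k, colip X X k k = 1) ->
  (forall k l, k != l -> `|colip X X k l| <= mu) -> (nnz w <= s)%N ->
  `|sqnorm (X *m w) - sqnorm w| <= mu * (s%:R - 1) * sqnorm w.
Proof.
move=> mu0 diag1 off_mu ws.
have offdiag : sqnorm (X *m w) - sqnorm w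
    = \sum_k \sum_(l | l != k) (w k 0)^* * colip X X k l * w l 0.
  rewrite sqnorm_gram sqnormE -sumrB; apply: eq_bigr => k _.
  by rewrite (bigD1 k) //= diag1 mulr1 addrAC subrr add0r.
have off_le : `|sqnorm (X *m w) - sqnorm w|
    <= mu * \sum_k \sum_(l | l != k) `|w k 0| * `|w l 0|.
  rewrite offdiag mulr_sumr; apply: le_trans (ler_norm_sum _ _ _) _.
  apply: ler_sum => k _; rewrite mulr_sumr.
  apply: le_trans (ler_norm_sum _ _ _) _; apply: ler_sum => l lk.
  rewrite !normrM norm_conjC -mulrA mulrCA.
  by apply: ler_wpM2r; rewrite ?mulr_ge0 // off_mu // eq_sym.
apply: le_trans off_le _; rewrite -mulrA ler_wpM2l // sum_offdiag.
by rewrite mulrBl mul1r lerB ?sparse_l1_sq.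
Qed.

Lemma sqnorm_cross M p n (Y : 'M[C]_(M, p)) (X : 'M[C]_(M, n)) (mu : C)
    (x : 'cV[C]_n) s :
  0 <= mu -> (forall j k, `|colip Y X j k| <= mu) -> (nnz x <= s)%N ->
  sqnorm (adjmx Y *m (X *m x)) <= p%:R * mu ^+ 2 * (s%:R * sqnorm x).
Proof.
move=> mu0 Ymu xs; set L1 := \sum_k `|x k 0|.
have entry_le j : `|(adjmx Y *m (X *m x)) j 0| <= mu * L1.
  rewrite mulmxA mxE mulr_sumr; apply: le_trans (ler_norm_sum _ _ _) _.
  by apply: ler_sum => k _; rewrite normrM adjmx_mulE ler_wpM2r.
have entry_sq j :
    `|(adjmx Y *m (X *m x)) j 0| ^+ 2 <= mu ^+ 2 * (s%:R * sqnorm x).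
  apply: le_trans (_ : (mu * L1) ^+ 2 <= _).
    by rewrite lerXn2r ?nnegrE ?normr_ge0 ?mulr_ge0 ?entry_le ?sumr_ge0.
  by rewrite exprMn ler_wpM2l ?exprn_ge0 ?sparse_l1_sq.
rewrite [X in X <= _]/sqnorm.
apply: le_trans (ler_sum _ (fun j _ => entry_sq j)) _.
by rewrite sumr_const card_ord -mulrA [X in _ <= X]mulr_natl.
Qed.

End Sparse.

Section Projection.
Variable C : numClosedFieldType.

Lemma amgm (a b c : C) : a \is Num.real -> b \is Num.real -> 0 < c ->
  a * b *+ 2 <= c * a ^+ 2 + b ^+ 2 / c.
Proof.
move=> ar br c0; rewrite -subr_ge0.
have -> : c * a ^+ 2 + b ^+ 2 / c - a * b *+ 2 = (c * a - b) ^+ 2 / c.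
  by field; rewrite lt0r_neq0.
by apply: divr_ge0; [rewrite -realEsqr rpredB // rpredM // gtr0_real | exact: ltW].
Qed.

Lemma gram_adj M n (X : 'M[C]_(M, n)) : adjmx (adjmx X *m X) = adjmx X *m X.
Proof. by rewrite adjmxM adjmxK. Qed.

Lemma sqnorm_mul M n (X : 'M[C]_(M, n)) (w : 'cV[C]_n) :
  sqnorm (X *m w) = (adjmx w *m (adjmx X *m X *m w)) 0 0.
Proof. by rewrite sqnorm_adj adjmxM !mulmxA. Qed.

Lemma sqnorm_compl_proj m (P : 'M[C]_m) (y : 'cV[C]_m) :
  adjmx P = P -> P *m P = P ->
  sqnorm ((1%:M - P) *m y) = sqnorm y - sqnorm (P *m y).
Proof.
move=> PH PP; have PP' : adjmx P *m P = P by rewrite PH.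
have QQ : adjmx (1%:M - P) *m (1%:M - P) = 1%:M - P.
  by rewrite adjmxB adjmx1 PH mulmxBl mul1mx mulmxBr mulmx1 PP subrr subr0.
by rewrite [sqnorm y]sqnorm_adj !sqnorm_mul QQ PP' mulmxBl mul1mx mulmxBr !mxE.
Qed.

Variables (M n : nat) (X : 'M[C]_(M, n)) (c : C).
Hypothesis c_gt0 : 0 < c.
Hypothesis frame_lb : forall w, c * sqnorm w <= sqnorm (X *m w).

Lemma gram_unitmx : adjmx X *m X \in unitmx.
Proof.
rewrite unitmxE unitfE; apply/negP => /det0P [v v_neq0 vG0].
have Gv0 : adjmx X *m X *m adjmx v = 0.
  by rewrite -gram_adj -adjmxM vG0 adjmx0.
have Xv0 : sqnorm (X *m adjmx v) = 0 by rewrite sqnorm_mul Gv0 mulmx0 mxE.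
have v0 : sqnorm (adjmx v) = 0.
  apply/eqP; rewrite eq_le sqnorm_ge0 andbT -(pmulr_rle0 _ c_gt0) -Xv0.
  exact: frame_lb.
by move: v_neq0; rewrite -[v]adjmxK (sqnorm_eq0 v0) adjmx0 eqxx.
Qed.

Lemma proj_adj : adjmx (X *m pinv X) = X *m pinv X.
Proof. by rewrite /pinv !adjmxM adjmxK adjmxV gram_adj !mulmxA. Qed.

Lemma proj_idem : X *m pinv X *m (X *m pinv X) = X *m pinv X.
Proof.
rewrite /pinv !mulmxA -[X *m _ *m _ *m X]mulmxA -(mulmxA X).
by rewrite mulVmx ?gram_unitmx // mulmx1.
Qed.

Lemma sqnorm_backproj w : sqnorm (X *m w) <= sqnorm (adjmx X *m X *m w) / c.
Proof.
set q := sqnorm (X *m w); set z := adjmx X *m X *m w.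
have q_abs : `|q| <= \sum_k `|w k 0| * `|z k 0|.
  rewrite /q sqnorm_mul mxE; apply: le_trans (ler_norm_sum _ _ _) _.
  by apply: ler_sum => k _; rewrite !mxE normrM norm_conjC.
have sum_amgm :
    (\sum_k `|w k 0| * `|z k 0|) *+ 2 <= c * sqnorm w + sqnorm z / c.
  rewrite -sumrMnl /sqnorm mulr_sumr mulr_suml -big_split /=.
  by apply: ler_sum => k _; apply: amgm; rewrite ?normr_real.
have q_le : q *+ 2 <= q + sqnorm z / c.
  apply: le_trans (_ : c * sqnorm w + sqnorm z / c <= _).
    apply: le_trans sum_amgm; rewrite lerMn2r /=; apply: le_trans q_abs.
    exact: real_ler_norm (sqnorm_real _).
  by rewrite lerD2r frame_lb.
by move: q_le; rewrite mulr2n lerD2l.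
Qed.

Lemma residual_bounds y :
  sqnorm y - sqnorm (adjmx X *m y) / c <= sqnorm ((1%:M - X *m pinv X) *m y)
  <= sqnorm y.
Proof.
rewrite sqnorm_compl_proj ?proj_adj ?proj_idem // -mulmxA.
have normal_eq : adjmx X *m X *m (pinv X *m y) = adjmx X *m y.
  by rewrite /pinv !mulmxA mulmxV ?gram_unitmx // mul1mx.
apply/andP; split; first by rewrite lerB // -normal_eq sqnorm_backproj.
by rewrite lerBlDr lerDl sqnorm_ge0.
Qed.

End Projection.

Section ResidualRIP.
Variable C : numClosedFieldType.

Lemma norm_sub_bounds (a b e : C) : a \is Num.real -> b \is Num.real ->
  `|a - b| <= e -> b - e <= a <= b + e.
Proof.
move=> ar br; rewrite real_ler_norml ?rpredB // lerNl opprB !lerBlDr.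
by case/andP=> lo hi; rewrite addrC lo addrC hi.
Qed.

Lemma unit_cols_diag M n (X : 'M[C]_(M, n)) k :
  unit_cols X -> colip X X k k = 1.
Proof. by move=> X1; rewrite colip_diag X1. Qed.

Lemma coh_deviation M n (X : 'M[C]_(M, n)) (x : 'cV[C]_n) s :
  unit_cols X -> (nnz x <= s)%N ->
  sqnorm x - coh X * (s%:R - 1) * sqnorm x <= sqnorm (X *m x)
  <= sqnorm x + coh X * (s%:R - 1) * sqnorm x.
Proof.
move=> X1 xs; apply: norm_sub_bounds; rewrite ?sqnorm_real //.
apply: gram_deviation => //; first exact: coh_ge0.
  by move=> k; exact: unit_cols_diag.
exact: coh_le.
Qed.

Variables (M Na Nb : nat) (A : 'M[C]_(M, Na)) (B : 'M[C]_(M, Nb)) (E : {set 'I_Nb}).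

Lemma subcols_frame w : unit_cols B ->
  (1 - coh B * (#|E|%:R - 1)) * sqnorm w <= sqnorm (subcols B E *m w).
Proof.
move=> B1; have wE : (nnz w <= #|E|)%N.
  by rewrite /nnz -[X in (_ <= X)%N]card_ord max_card.
have diag1 k : colip (subcols B E) (subcols B E) k k = 1.
  by rewrite colip_subcols unit_cols_diag.
have off_coh k l : k != l -> `|colip (subcols B E) (subcols B E) k l| <= coh B.
  by move=> kl; rewrite colip_subcols coh_le // (inj_eq enum_val_inj).
have dev := gram_deviation (coh_ge0 B) diag1 off_coh wE.
have /andP[lo _] := norm_sub_bounds (sqnorm_real _) (sqnorm_real _) dev.
by rewrite mulrBl mul1r.
Qed.

Lemma cross_subcols nx (x : 'cV[C]_Na) : (nnz x <= nx)%N ->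
  sqnorm (adjmx (subcols B E) *m (A *m x))
  <= #|E|%:R * mcoh A B ^+ 2 * (nx%:R * sqnorm x).
Proof.
apply: sqnorm_cross; first exact: mcoh_ge0.
by move=> j k; rewrite colipC norm_conjC colip_subcolsr mcoh_le.
Qed.

Lemma rip_residual nx : unit_cols A -> unit_cols B ->
  0 < 1 - coh B * (#|E|%:R - 1) ->
  rip (projE B E *m A) nx (coh A * (nx%:R - 1)
    + nx%:R * #|E|%:R * mcoh A B ^+ 2 / (1 - coh B * (#|E|%:R - 1))).
Proof.
move=> A1 B1; set c := 1 - _ => c_gt0 x xs.
set D := coh A * _; set K := _ / c.
have /andP[res_lo res_hi] := residual_bounds c_gt0 (subcols_frame ^~ B1) (A *m x).
have /andP[dev_lo dev_hi] := coh_deviation A1 xs.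
have cross_K : sqnorm (adjmx (subcols B E) *m (A *m x)) / c <= K * sqnorm x.
  rewrite (_ : K * _ = #|E|%:R * mcoh A B ^+ 2 * (nx%:R * sqnorm x) / c).
    by apply: ler_wpM2r; [rewrite invr_ge0 ltW | exact: cross_subcols].
  by rewrite /K; ring.
have K_ge0 : 0 <= K by rewrite divr_ge0 ?mulr_ge0 ?ler0n ?exprn_ge0 ?mcoh_ge0 ?ltW.
rewrite -/D in dev_lo dev_hi; rewrite -mulmxA; apply/andP; split.
  apply: le_trans res_lo.
  rewrite (_ : _ * sqnorm x = sqnorm x - D * sqnorm x - K * sqnorm x); last by ring.
  exact: lerB.
apply: le_trans res_hi _; apply: le_trans dev_hi _.
by rewrite !mulrDl mul1r addrA lerDl mulr_ge0 ?sqnorm_ge0.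
Qed.

End ResidualRIP.

Lemma pospart_id (C : numClosedFieldType) (x : C) : 0 <= x -> pospart x = x.
Proof.
move=> x0; apply/comparable_max_idPl => //.
by rewrite real_comparable ?real0 ?ger0_real.
Qed.

Unset Implicit Arguments.

Theorem lemma1 (C : numClosedFieldType) (M Na Nb : nat)
  (A : 'M[C]_(M, Na)) (B : 'M[C]_(M, Nb)) (E : {set 'I_Nb}) (nx : nat) :
  unit_cols A -> unit_cols B ->
  0 < 1 - coh B * (#|E|%:R - 1) ->
  (1 <= nx)%N ->
  let At := projE B E *m A in
  let bound := coh A * (nx%:R - 1)
               + nx%:R * #|E|%:R * mcoh A B ^+ 2 / pospart (1 - coh B * (#|E|%:R - 1)) in
  rip At nx bound /\ (forall d, is_ric At nx d -> d <= bound).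
Proof.
move=> A1 B1 c_gt0 _ At bound.
have c_pos : pospart (1 - coh B * (#|E|%:R - 1)) = 1 - coh B * (#|E|%:R - 1).
  exact: pospart_id (ltW c_gt0).
have rip_bound : rip At nx bound by rewrite /bound c_pos; exact: rip_residual.
have bound_real : bound \is Num.real.
  have aR := ger0_real (coh_ge0 A); have bR := ger0_real (coh_ge0 B).
  have mR := ger0_real (mcoh_ge0 A B).
  rewrite /bound c_pos.
  by rewrite !(rpredD, rpredM, rpredV, rpredB, rpredX, realn, rpred1, rpredN).
split=> // d [_ [_ minimal]]; exact: minimal.
Qed.
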